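(* Let $\mathbb{K}\in\{\mathbb{R},\mathbb{C}\}$ and let $\mathcal{X}$ be a topological $\mathbb{K}$-vector space whose topological dual $\mathcal{X}^{\ast}$ separates the points of $\mathcal{X}$. Then for every cylinder $\mathcal{V}\in\mathcal{C}$, both $\mathbf{B}_{\mathcal{V}}(\mathcal{X}^{\ast})$ and its complement $\mathbf{F}(\mathcal{X}^{\ast})\setminus\mathbf{B}_{\mathcal{V}}(\mathcal{X}^{\ast})$ are closed (hence both are open and closed) subsets of $\mathbf{F}(\mathcal{X}^{\ast})$ in the weak*-Hausdorff hypertopology.
   Context: Topological vector spaces are Hausdorff. $\mathcal{X}^{\ast}$ carries the weak* topology. $\mathbf{F}(\mathcal{X}^{\ast})$ is the set of nonempty weak*-closed subsets of $\mathcal{X}^{\ast}$. For $A\in\mathcal{X}$ and $F,\tilde F\in\mathbf{F}(\mathcal{X}^{\ast})$, $d_H^{(A)}(F,\tilde F)=\max\{\sup_{\sigma\in F}\inf_{\tilde\sigma\in\tilde F}|(\sigma-\tilde\sigma)(A)|,\ \sup_{\tilde\sigma\in\tilde F}\inf_{\sigma\in F}|(\sigma-\tilde\sigma)(A)|\}\in[0,\infty]$. The weak*-Hausdorff hypertopology on $\mathbf{F}(\mathcal{X}^{\ast})$ is the topology generated by the family of extended pseudometrics $\{d_H^{(A)}\}_{A\in\mathcal{X}}$ (a net $F_j\to F$ iff $d_H^{(A)}(F_j,F)\to0$ for all $A\in\mathcal{X}$). For $A\in\mathcal{X}$ let $\mathcal{V}_A=\{\sigma\in\mathcal{X}^{\ast}:|\sigma(A)|<1\}$;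 $\mathcal{C}=\{\bigcap_{j=1}^n\mathcal{V}_{A_j}: n\in\mathbb{N},\ A_1,\dots,A_n\in\mathcal{X}\}$. For $\mathcal{V}\in\mathcal{C}$, $\mathbf{B}_{\mathcal{V}}(\mathcal{X}^{\ast})=\{B\in\mathbf{F}(\mathcal{X}^{\ast}): B\subseteq\lambda\mathcal{V}\text{ for some }\lambda>0\}$. *)

From HB Require Import structures.
From mathcomp Require Import all_boot all_order all_algebra.
From mathcomp Require Import all_classical all_reals all_analysis.
From mathcomp Require Import complex.
Set Implicit Arguments. Unset Strict Implicit. Unset Printing Implicit Defensive.
Import Order.TTheory GRing.Theory Num.Theory.
Import numFieldTopology.Exports.
Local Open Scope classical_set_scope.
Local Open Scope ring_scope.

Section WeakStarHausdorff.
(* R : the reals; K : the scalar field (instantiated below with R and C = R[i]);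
   nrm : K -> R is the absolute value / modulus of K. *)
Variables (R : realType) (K : numFieldType) (nrm : K -> R).
Variable X : topologicalLmodType K.

Definition dual : set (X -> K) :=
  [set f | (forall (a : K) (x y : X), f (a *: x + y) = a * f x + f y)
           /\ continuous f].

Definition dual_separates : Prop :=
  forall x y : X, x <> y -> exists f, dual f /\ f x <> f y.

(* weak*-closed subsets of X^star : the complement in X^star is weak*-open, where
   basic weak* neighbourhoods of s are
   { t in X^star | |t(A_i) - s(A_i)| < e, i < n }. *)
Definition weakstar_closed (S : set (X -> K)) : Prop :=
  S `<=` dual /\
  forall s, dual s -> ~ S s ->
    exists (n : nat) (A : 'I_n -> X) (e : R), 0 < e /\
      forall t, dual t -> (forall i, nrm (t (A i) - s (A i)) < e) -> ~ S t.

Definition Fsets : set (set (X -> K)) :=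
  [set F | F !=set0 /\ weakstar_closed F].

Definition dH (A : X) (F G : set (X -> K)) : \bar R :=
  maxe
    (ereal_sup [set ereal_inf [set (nrm (s A - t A))%:E | t in G] | s in F])
    (ereal_sup [set ereal_inf [set (nrm (s A - t A))%:E | s in F] | t in G]).

(* open sets of the weak*-Hausdorff hypertopology on F(X^star) (topology
   generated by the family of extended pseudometrics {d_H^(A)}_A) *)
Definition hyper_open (U : set (set (X -> K))) : Prop :=
  U `<=` Fsets /\
  forall F, U F -> exists (n : nat) (A : 'I_n -> X) (e : R), 0 < e /\
    forall G, Fsets G -> (forall i, (dH (A i) F G < e%:E)%E) -> U G.

Definition hyper_closed (S : set (set (X -> K))) : Prop :=
  S `<=` Fsets /\ hyper_open (Fsets `\` S).

Definition V_ (A : X) : set (X -> K) := [set s | dual s /\ nrm (s A) < 1].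

Definition cylinder (n : nat) (A : 'I_n -> X) : set (X -> K) :=
  dual `&` (fun s => forall i, V_ (A i) s).

Definition scale_set (l : K) (V : set (X -> K)) : set (X -> K) :=
  [set fun x => l * s x | s in V].

Definition Bsets (V : set (X -> K)) : set (set (X -> K)) :=
  [set B | Fsets B /\ exists l : K, 0 < l /\ B `<=` scale_set l V].

End WeakStarHausdorff.

Arguments Fsets {R K} nrm X.

Definition prop3p3_for (R : realType) (K : numFieldType) (nrm : K -> R) : Prop :=
  forall X : topologicalLmodType K,
    hausdorff_space X -> dual_separates X ->
    forall (n : nat) (A : 'I_n -> X),
      hyper_closed nrm (Bsets nrm (cylinder nrm A)) /\
      hyper_closed nrm (Fsets nrm X `\` Bsets nrm (cylinder nrm A)).

Definition cmod (R : realType) (z : R[i]) : R :=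
  Num.sqrt (complex.Re z ^+ 2 + complex.Im z ^+ 2).


From HB Require Import structures.
From mathcomp Require Import all_boot all_order all_algebra.
From mathcomp Require Import all_classical all_reals all_analysis.
From mathcomp Require Import complex.
Set Implicit Arguments. Unset Strict Implicit. Unset Printing Implicit Defensive.
Import Order.TTheory GRing.Theory Num.Theory.
Import numFieldTopology.Exports.
Local Open Scope classical_set_scope.
Local Open Scope ring_scope.

(** A closed set F of functionals lies in some multiple of the cylinder
    V_{A_1} cap ... cap V_{A_n} exactly when each evaluation s |-> s(A_i) is
    bounded on F.  If d_H^{(A_i)}(F, G) < 1 for all i, every point of G is
    within distance 1 of a point of F at each A_i and vice versa, so these
    evaluations are bounded on F iff they are bounded on G.  Hence membership
    in B_V is locally constant for the hypertopology, i.e. B_V is clopen. *)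

Section AbsoluteValue.
Variables (R : realType) (K : numFieldType) (nrm : K -> R).
Hypotheses (nrm_ge0 : forall z, 0 <= nrm z)
  (nrmD : forall a b, nrm (a + b) <= nrm a + nrm b)
  (nrmN : forall a, nrm (- a) = nrm a)
  (nrmM : forall a b, nrm (a * b) = nrm a * nrm b)
  (nrm_pos_onto : forall r, 0 < r -> exists2 l : K, 0 < l & nrm l = r).

Section Space.
Variable X : topologicalLmodType K.

Definition evals_bounded (F : set (X -> K)) (a : X) : Prop :=
  exists M : R, forall s, F s -> nrm (s a) <= M.

Lemma dualMl (k : K) (s : X -> K) : dual s -> dual (fun x => k * s x).
Proof.
move=> [lin cs]; split; first by move=> a x y; rewrite lin mulrDr mulrCA.
by move=> x; apply: continuousM; [exact: cst_continuous | exact: cs].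
Qed.

Lemma Bsets_cylinderP n (A : 'I_n -> X) F : Fsets nrm X F ->
  Bsets nrm (cylinder nrm A) F <-> forall i, evals_bounded F (A i).
Proof.
move=> FF; split.
  move=> [_ [l [_ Fsub]]] i; exists (nrm l) => _ /Fsub [s [_ Vs] <-].
  rewrite nrmM -[leRHS]mulr1 ler_wpM2l //; exact/ltW/(Vs i).2.
move=> /choice[M FM]; split=> //.
pose N := \sum_i `|M i| + 1.
have [l l_gt0 nrml] : exists2 l : K, 0 < l & nrm l = N.
  by apply: nrm_pos_onto; rewrite ltr_pwDr ?ltr01 ?sumr_ge0.
have l_neq0 : l != 0 by rewrite gt_eqF.
exists l; split=> // s Fs.
exists (fun x => l^-1 * s x); last by apply/funext => x; rewrite mulrA divff ?mul1r.
have ds : dual s by case: FF => _ [Fdual _]; exact: Fdual.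
split; first exact: dualMl.
move=> i; split; first exact: dualMl.
have : nrm (s (A i)) < N.
  apply: le_lt_trans (FM i s Fs) _; apply: le_lt_trans (ler_norm _) _.
  by rewrite ltr_pwDr ?ltr01 // (bigD1 i) //= lerDl sumr_ge0.
have -> : nrm (s (A i)) = N * nrm (l^-1 * s (A i)).
  by rewrite -nrml -nrmM mulrA divff ?mul1r.
by rewrite -[ltRHS]mulr1 ltr_pM2l // ltr_pwDr ?ltr01 ?sumr_ge0.
Qed.

Lemma dHC (a : X) F G : dH nrm a F G = dH nrm a G F.
Proof.
have nrmB x y : nrm (x - y) = nrm (y - x) by rewrite -nrmN opprB.
rewrite /dH maxC; congr maxe; congr ereal_sup; apply: eq_imagel => ? _;
  congr ereal_inf; apply: eq_imagel => ? _; by rewrite nrmB.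
Qed.

Lemma dH_lt1_approx (a : X) F G : (dH nrm a F G < 1%:E)%E ->
  forall s, F s -> exists2 t, G t & nrm (s a - t a) < 1.
Proof.
rewrite /dH gt_max => /andP[dFG _] s Fs.
have : (ereal_inf [set (nrm (s a - t a))%:E | t in G] < 1%:E)%E.
  by apply: le_lt_trans dFG; apply: ereal_sup_ubound; exists s.
by case/ereal_inf_lt => _ [t Gt <-]; rewrite lte_fin; exists t.
Qed.

Lemma evals_bounded_dH (a : X) F G :
  (dH nrm a F G < 1%:E)%E -> evals_bounded F a -> evals_bounded G a.
Proof.
rewrite dHC => dGF [M FM]; exists (M + 1) => t Gt.
have [s Fs st] := dH_lt1_approx dGF Gt.
rewrite -(subrK (s a) (t a)) addrC.
by apply: le_trans (nrmD _ _) _; apply: lerD; [exact: FM | exact: ltW].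
Qed.

Lemma hyper_open_dH_stable n (A : 'I_n -> X) (U : set (set (X -> K))) :
  U `<=` Fsets nrm X ->
  (forall F G, Fsets nrm X G -> (forall i, (dH nrm (A i) F G < 1%:E)%E) ->
     U F -> U G) ->
  hyper_open nrm U.
Proof.
move=> UF Ustable; split=> // F UF'; exists n, A, 1; split; first exact: ltr01.
by move=> G FG dFG; exact: Ustable dFG UF'.
Qed.

Lemma hyper_clopen_dH_stable n (A : 'I_n -> X) (S : set (set (X -> K))) :
  S `<=` Fsets nrm X ->
  (forall F G, Fsets nrm X G -> (forall i, (dH nrm (A i) F G < 1%:E)%E) ->
     S F -> S G) ->
  hyper_closed nrm S /\ hyper_closed nrm (Fsets nrm X `\` S).
Proof.
move=> SF Sstable; split; split=> //.
- apply: (hyper_open_dH_stable (A := A)) => // F G FG dFG [FF nSF].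
  split=> // SG; apply: nSF; apply: (Sstable G F FF) SG => i; rewrite dHC.
  exact: dFG.
- rewrite setDD setIidr //.
  exact: (hyper_open_dH_stable (A := A)).
Qed.

End Space.

Lemma prop3p3_for_absolute_value : prop3p3_for nrm.
Proof.
move=> X _ _ n A; apply: (hyper_clopen_dH_stable (A := A)) => [B [] //|].
move=> F G FG dFG BF; have [FF _] := BF.
apply/(Bsets_cylinderP A FG) => i; apply: evals_bounded_dH (dFG i) _.
by move: i; apply/(Bsets_cylinderP A FF).
Qed.

End AbsoluteValue.

Lemma cmodE (R : realType) (z : R[i]) : cmod z = ComplexField.Normc.normc z.
Proof. by case: z. Qed.

Theorem proposition3p3 (R : realType) :
  prop3p3_for (K := R^o) (fun x : R^o => `|x| : R) /\
  prop3p3_for (K := (R[i])^o) (fun z : (R[i])^o => cmod (z : R[i])).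
Proof.
split; apply: prop3p3_for_absolute_value.
- exact: normr_ge0.
- exact: ler_normD.
- exact: normrN.
- exact: normrM.
- by move=> r r_gt0; exists r => //; rewrite gtr0_norm.
- by move=> [a b]; rewrite cmodE sqrtr_ge0.
- by move=> a b; rewrite !cmodE le_normcD.
- by move=> a; rewrite !cmodE normcN.
- by move=> a b; rewrite !cmodE ComplexField.Normc.normcM.
- move=> r r_gt0; exists (r%:C)%C; first by rewrite ltcR.
  by rewrite /cmod /= expr0n addr0 sqrtr_sqr gtr0_norm.
Qed.
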